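(* Let $L\subseteq Q$ be an extension of Lie algebras with $L$ semiprime and $Q$ an algebra of quotients of $L$. Then $[Q,Q]$ is an algebra of quotients of $[L,L]$.
   Context: Lie algebras over a commutative unital ring $\Phi$. $[L,L]$ is the span of all brackets of elements of $L$. $\mathrm{Ann}_L(X)=\{a\in L:[a,x]=0\ \forall x\in X\}$. $L$ is semiprime if $[I,I]\ne 0$ for every nonzero ideal $I$. For a Lie subalgebra $L\subseteq Q$, $Q$ is an algebra of quotients of $L$ if for every nonzero $q\in Q$ there is an ideal $I$ of $L$ with $\mathrm{Ann}_L(I)=0$ and $0\ne[I,q]\subseteq L$. *)

From HB Require Import structures.
From mathcomp Require Import all_boot all_algebra.
Set Implicit Arguments. Unset Strict Implicit. Unset Printing Implicit Defensive.
Import GRing.Theory.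
Local Open Scope ring_scope.

Section Lie.
Variables (Phi : comPzRingType) (V : lmodType Phi) (br : V -> V -> V).

Definition is_lie_bracket : Prop :=
  [/\ forall (c : Phi) x y z, br (c *: x + y) z = c *: br x z + br y z,
      forall (c : Phi) x y z, br z (c *: x + y) = c *: br z x + br z y,
      forall x, br x x = 0
    & forall x y z, br x (br y z) + br y (br z x) + br z (br x y) = 0].

Definition submodule (S : V -> Prop) : Prop :=
  [/\ S 0, forall x y, S x -> S y -> S (x + y)
    & forall (c : Phi) x, S x -> S (c *: x)].

Definition lie_subalgebra (S : V -> Prop) : Prop :=
  submodule S /\ forall x y, S x -> S y -> S (br x y).

Definition lie_ideal (S I : V -> Prop) : Prop :=
  [/\ forall x, I x -> S x, submodule I
    & forall x y, S x -> I y -> I (br x y)].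

(* [S,S]: the Phi-span of all brackets of elements of S *)
Definition derived (S : V -> Prop) : V -> Prop :=
  fun x => exists (n : nat) (c : 'I_n -> Phi) (a b : 'I_n -> V),
    (forall i, S (a i) /\ S (b i)) /\
    x = \sum_(i < n) c i *: br (a i) (b i).

Definition ann_zero (S X : V -> Prop) : Prop :=
  forall a, S a -> (forall x, X x -> br a x = 0) -> a = 0.

Definition semiprime (S : V -> Prop) : Prop :=
  forall I, lie_ideal S I -> (exists x, I x /\ x <> 0) ->
    exists x y, I x /\ I y /\ br x y <> 0.

Definition algebra_of_quotients (L Q : V -> Prop) : Prop :=
  [/\ lie_subalgebra Q, lie_subalgebra L, (forall x, L x -> Q x)
    & forall q, Q q -> q <> 0 ->
        exists I, [/\ lie_ideal L I, ann_zero L I,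
                      (exists x, I x /\ br x q <> 0)
                    & forall x, I x -> L (br x q)]].

End Lie.

(* The ideal [I,I] of a quotient-witness ideal I serves as witness for [L,L] and [Q,Q].
   Everything rests on one fact: in a semiprime L, Ann_L(I) = 0 forces Ann_L([I,I]) = 0.
   With K = Ann_L([I,I]) and M = K ∩ I, the ideal [M,M] lies in K ∩ [I,I], hence is abelian;
   semiprimeness kills [M,M] and then M, so [K,I] ⊆ M = 0 and K ⊆ Ann_L(I) = 0.
   Nonvanishing of [[I,I],q] then follows from Jacobi, and [[a,b],q] = [a,[b,q]] + [[a,q],b]
   shows [[I,I],q] ⊆ [L,L]. *)
From HB Require Import structures.
From mathcomp Require Import all_boot all_algebra.
From Stdlib Require Import Classical.
Set Implicit Arguments. Unset Strict Implicit. Unset Printing Implicit Defensive.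
Import GRing.Theory.
Local Open Scope ring_scope.

Section Derived.
Variables (Phi : comPzRingType) (V : lmodType Phi) (br : V -> V -> V).
Implicit Types (S T : V -> Prop) (x y : V).

Lemma derived0 S : derived br S 0.
Proof.
by exists 0%N, (fun _ => 0), (fun _ => 0), (fun _ => 0); rewrite big_ord0; split => //; case.
Qed.

Lemma derived_br S a b : S a -> S b -> derived br S (br a b).
Proof.
move=> Sa Sb; exists 1%N, (fun _ => 1), (fun _ => a), (fun _ => b).
by rewrite big_ord1 scale1r.
Qed.

Lemma derivedD S x y : derived br S x -> derived br S y -> derived br S (x + y).
Proof.
move=> [m [c [a [b [Sab ->]]]]] [n [c' [a' [b' [Sab' ->]]]]].
pose glue (A : Type) (f : 'I_m -> A) (g : 'I_n -> A) (i : 'I_(m + n)) :=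
  match split i with inl j => f j | inr k => g k end.
exists (m + n)%N, (glue _ c c'), (glue _ a a'), (glue _ b b'); split.
  by move=> i; rewrite /glue; case: split.
rewrite big_split_ord /glue; congr (_ + _); apply: eq_bigr => i _.
  by rewrite (unsplitK (inl i)).
by rewrite (unsplitK (inr i)).
Qed.

Lemma derivedZ S (k : Phi) x : derived br S x -> derived br S (k *: x).
Proof.
move=> [n [c [a [b [Sab ->]]]]]; exists n, (fun i => k * c i), a, b; split => //.
by rewrite scaler_sumr; apply: eq_bigr => i _; rewrite scalerA.
Qed.

Lemma submodule_derived S : submodule (derived br S).
Proof. by split; [exact: derived0 | exact: derivedD | exact: derivedZ]. Qed.

Lemma derived_ind S T : submodule T -> (forall a b, S a -> S b -> T (br a b)) ->
  forall x, derived br S x -> T x.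
Proof.
move=> [T0 TD TZ] Tbr x [n [c [a [b [Sab ->]]]]].
elim/big_rec: _ => // i y _ Ty; apply: TD => //; apply: TZ.
by have [] := Sab i; apply: Tbr.
Qed.

Lemma derived_mono S T : (forall x, S x -> T x) -> forall x, derived br S x -> derived br T x.
Proof.
move=> ST; apply: derived_ind; first exact: submodule_derived.
by move=> a b Sa Sb; apply: derived_br; apply: ST.
Qed.

Lemma derived_sub S : lie_subalgebra br S -> forall x, derived br S x -> S x.
Proof. by case=> S_sub Sbr; apply: derived_ind. Qed.

Lemma lie_subalgebra_derived S : lie_subalgebra br S -> lie_subalgebra br (derived br S).
Proof.
move=> S_alg; split; first exact: submodule_derived.
by move=> x y /(derived_sub S_alg) Sx /(derived_sub S_alg) Sy; apply: derived_br.
Qed.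

Lemma lie_ideal_subalgebra L I : lie_ideal br L I -> lie_subalgebra br I.
Proof. by case=> IL I_sub Ibr; split=> // x y /IL; apply: Ibr. Qed.

Lemma lie_ideal_restrict L S I : lie_ideal br L I ->
  (forall x, I x -> S x) -> (forall x, S x -> L x) -> lie_ideal br S I.
Proof. by move=> [_ I_sub Ibr] IS SL; split=> // x y /SL; apply: Ibr. Qed.

Lemma lie_idealI L I J : lie_ideal br L I -> lie_ideal br L J ->
  lie_ideal br L (fun x => I x /\ J x).
Proof.
move=> [IL [I0 ID IZ] Ibr] [_ [J0 JD JZ] Jbr]; split.
- by move=> x [/IL].
- split=> //; first by move=> x y [Ix Jx] [Iy Jy]; split; [apply: ID | apply: JD].
  by move=> k x [Ix Jx]; split; [apply: IZ | apply: JZ].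
- by move=> x y Lx [Iy Jy]; split; [apply: Ibr | apply: Jbr].
Qed.

Lemma semiprime_abelian_ideal L I : semiprime br L -> lie_ideal br L I ->
  (forall x y, I x -> I y -> br x y = 0) -> forall x, I x -> x = 0.
Proof.
move=> Lsp I_ideal Iab x Ix; apply: NNPP => x_neq0.
have [u [v [Iu [Iv]]]] := Lsp I I_ideal (ex_intro _ x (conj Ix x_neq0)).
by rewrite Iab.
Qed.

End Derived.

Section LieAlgebra.
Variables (Phi : comPzRingType) (V : lmodType Phi) (br : V -> V -> V).
Hypothesis lie : is_lie_bracket br.

Lemma brDl x y z : br (x + y) z = br x z + br y z.
Proof. by have [brl _ _ _] := lie; rewrite -[x]scale1r brl !scale1r. Qed.

Lemma brDr x y z : br z (x + y) = br z x + br z y.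
Proof. by have [_ brr _ _] := lie; rewrite -[x]scale1r brr !scale1r. Qed.

Lemma br0l z : br 0 z = 0.
Proof. by apply: (@addrI _ (br 0 z)); rewrite -brDl !addr0. Qed.

Lemma br0r z : br z 0 = 0.
Proof. by apply: (@addrI _ (br z 0)); rewrite -brDr !addr0. Qed.

Lemma brZl (c : Phi) x z : br (c *: x) z = c *: br x z.
Proof. by have [brl _ _ _] := lie; rewrite -[c *: x]addr0 brl br0l addr0. Qed.

Lemma brZr (c : Phi) x z : br z (c *: x) = c *: br z x.
Proof. by have [_ brr _ _] := lie; rewrite -[c *: x]addr0 brr br0r addr0. Qed.

Lemma brC x y : br x y = - br y x.
Proof.
have [_ _ brxx _] := lie; apply/eqP; rewrite -addr_eq0.
by have := brxx (x + y); rewrite brDl !brDr !brxx add0r addr0 => ->.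
Qed.

Lemma brJ x y z : br x (br y z) = br (br x y) z + br y (br x z).
Proof.
have [_ _ _ jacobi] := lie; apply/eqP; rewrite -subr_eq0.
have := jacobi x y z; rewrite (brC z (br x y)) (brC z x) -scaleN1r brZr scaleN1r.
by move=> <-; rewrite opprD addrA addrAC.
Qed.

Lemma lie_ideal_derived L I : lie_subalgebra br L -> lie_ideal br L I ->
  lie_ideal br L (derived br I).
Proof.
move=> L_alg I_ideal; have [IL _ Ibr] := I_ideal; split.
- by move=> x /(derived_mono IL); apply: derived_sub.
- exact: submodule_derived.
move=> x y Lx; move: y; apply: derived_ind.
  split; first by rewrite br0r; apply: derived0.
    by move=> u v Du Dv; rewrite brDr; apply: derivedD.
  by move=> k u Du; rewrite brZr; apply: derivedZ.
by move=> a b Ia Ib; rewrite brJ; apply: derivedD; apply: derived_br => //; apply: Ibr.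
Qed.

Definition ann (S X : V -> Prop) : V -> Prop :=
  fun a => S a /\ forall x, X x -> br a x = 0.

Lemma lie_ideal_ann L X : lie_subalgebra br L -> lie_ideal br L X ->
  lie_ideal br L (ann L X).
Proof.
move=> [[L0 LD LZ] Lbr] [_ _ Xbr]; split.
- by move=> x [].
- split; first by split=> // x _; rewrite br0l.
    move=> u v [Lu Au] [Lv Av]; split; first exact: LD.
    by move=> x Xx; rewrite brDl Au // Av // addr0.
  move=> k u [Lu Au]; split; first exact: LZ.
  by move=> x Xx; rewrite brZl Au // scaler0.
move=> x y Lx [Ly Ay]; split; first exact: Lbr.
by move=> z Xz; have := brJ x y z; rewrite Ay // br0r (Ay _ (Xbr _ _ Lx Xz)) addr0 => <-.
Qed.

Lemma ann_zero_derived L I : lie_subalgebra br L -> semiprime br L ->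
  lie_ideal br L I -> ann_zero br L I -> ann_zero br L (derived br I).
Proof.
move=> L_alg Lsp I_ideal annI a La Aa.
have [IL _ Ibr] := I_ideal.
pose K := ann L (derived br I).
have K_ideal : lie_ideal br L K by apply/lie_ideal_ann/lie_ideal_derived.
pose M x := K x /\ I x.
have M_ideal : lie_ideal br L M by exact: lie_idealI.
have DM_abelian x y : derived br M x -> derived br M y -> br x y = 0.
  move=> DMx DMy; have [[_ Kx] _] := derived_sub (lie_ideal_subalgebra M_ideal) DMx.
  by apply: Kx; apply: derived_mono DMy => z [].
have DM0 := semiprime_abelian_ideal Lsp (lie_ideal_derived L_alg M_ideal) DM_abelian.
have M0 : forall x, M x -> x = 0.
  apply: semiprime_abelian_ideal Lsp M_ideal _ => x y Mx My.
  by apply: DM0; apply: derived_br.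
apply: annI => // i Ii; apply: M0; split; last exact: Ibr.
have [_ [_ _ KZ] Kbr] := K_ideal; rewrite brC -scaleN1r; apply/KZ/Kbr; [exact: IL | by split].
Qed.

Lemma derived_br_neq0 L I q : lie_subalgebra br L -> lie_ideal br L I ->
  ann_zero br L (derived br I) -> (forall x, I x -> L (br x q)) ->
  (exists x, I x /\ br x q <> 0) -> exists x, derived br I x /\ br x q <> 0.
Proof.
move=> L_alg I_ideal annDI Iq [x [Ix xq_neq0]]; apply: NNPP => no_witness.
have DIq j : derived br I j -> br j q = 0.
  by move=> DIj; apply: NNPP => jq_neq0; apply: no_witness; exists j.
have [_ _ DIbr] := lie_ideal_derived L_alg I_ideal.
have [IL _ _] := I_ideal.
apply/xq_neq0/annDI; first exact: Iq.
move=> j DIj; have DIxj : derived br I (br x j) by apply: DIbr => //; apply: IL.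
have := brJ x q j.
by rewrite (brC q j) (DIq j DIj) oppr0 br0r (brC q) (DIq _ DIxj) oppr0 addr0 => <-.
Qed.

Lemma derived_br_quotient L I q : (forall x, I x -> L x) ->
  (forall x, I x -> L (br x q)) -> forall x, derived br I x -> derived br L (br x q).
Proof.
move=> IL Iq; apply: derived_ind.
  split; first by rewrite br0l; apply: derived0.
    by move=> u v Du Dv; rewrite brDl; apply: derivedD.
  by move=> k u Du; rewrite brZl; apply: derivedZ.
move=> a b Ia Ib.
have -> : br (br a b) q = br a (br b q) + br (br a q) b.
  by rewrite brJ (brC (br a q) b) addrK.
by apply: derivedD; apply: derived_br; auto.
Qed.

End LieAlgebra.

Theorem mainTheorem6 (Phi : comPzRingType) (V : lmodType Phi)
    (br : V -> V -> V) (L Q : V -> Prop) :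
  is_lie_bracket br ->
  semiprime br L ->
  algebra_of_quotients br L Q ->
  algebra_of_quotients br (derived br L) (derived br Q).
Proof.
move=> lie Lsp [Q_alg L_alg LQ quotQ].
split; [exact: lie_subalgebra_derived | exact: lie_subalgebra_derived
       | exact: derived_mono | ].
move=> q /(derived_sub Q_alg) Qq q_neq0.
have [I [I_ideal annI Iq_neq0 Iq]] := quotQ q Qq q_neq0.
have [IL _ _] := I_ideal.
have annDI := ann_zero_derived lie L_alg Lsp I_ideal annI.
exists (derived br I); split.
- apply: lie_ideal_restrict (lie_ideal_derived lie L_alg I_ideal) _ _.
    exact: derived_mono.
  exact: derived_sub.
- by move=> a /(derived_sub L_alg) La; apply: annDI.
- exact: (derived_br_neq0 lie L_alg I_ideal annDI Iq Iq_neq0).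
- exact: (derived_br_quotient lie IL Iq).
Qed.
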